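(* Consider the binary integer program \[\text{(P)}\qquad\min_{x\in\{0,1\}^n}\ \langle x,Qx\rangle+\langle c,x\rangle\quad\text{s.t. } Ax\ge b,\ Bx=d,\] with $Q\in\mathbb R^{n\times n}$ symmetric, $c\in\mathbb R^n$, $A\in\mathbb R^{m_1\times n}$, $b\in\mathbb R^{m_1}$, $B\in\mathbb R^{m_2\times n}$, $d\in\mathbb R^{m_2}$. Let $J\subseteq[m_2]$ be a row index set and $I\subseteq[n]$ a column index set, with complements $\bar J$, $\bar I$, such that $B_J$ and $d_J$ are integral, $B_J$ is totally unimodular, and $B_{JI}$ is invertible. Define $s:=B_{JI}^{-1}d_J$ and $S:=-B_{JI}^{-1}B_{J\bar I}$, and \[Q':=S^\top Q_{II}S+S^\top Q_{I\bar I}+Q_{I\bar I}^\top S+Q_{\bar I\bar I},\quad A':=A_{\cdot I}S+A_{\cdot\bar I},\quad B':=B_{\bar JI}S+B_{\bar J\bar I},\quad b':=b-A_{\cdot I}s,\] \[c':=2S^\top Q_{II}s+2Q_{I\bar I}^\top s+S^\top c_I+c_{\bar I},\quad d':=d_{\bar J}-B_{\bar JI}s,\quad c_0':=\langle s,Q_{II}s\rangle+\langle c_I,s\rangle.\] Then the problem \[\text{(P')}\qquad\min_{x_{\bar I}\in\{0,1\}^{n-|I|}}\ \langle x_{\bar I},Q'x_{\bar I}\rangle+\langle c',x_{\bar I}\rangle+c_0'\quad\text{s.t. } A'x_{\bar I}\ge b',\ B'x_{\bar I}=d',\ Sx_{\bar I}\ge-s,\ Sx_{\bar I}\le\mathbf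 1-s\] is an exact reformulation of (P): the map $x_{\bar I}\mapsto x$ with $x_I:=s+Sx_{\bar I}$ is a bijection from the feasible set of (P') onto the feasible set of (P) that preserves objective values; in particular (P) and (P') have the same optimal value and optimal solutions correspond under this map.
   Context: For index sets, $B_J$ denotes the rows of $B$ indexed by $J$, $B_{JI}$ the submatrix with rows $J$ and columns $I$, $A_{\cdot I}$ the columns of $A$ indexed by $I$, $Q_{II},Q_{I\bar I},Q_{\bar I\bar I}$ the corresponding blocks of $Q$, and $x_I$, $c_I$, $d_J$ the subvectors. A matrix is totally unimodular if every square submatrix has determinant in $\{-1,0,1\}$. $\mathbf 1$ is the all-ones vector; $[m]=\{1,\dots,m\}$. *)

From HB Require Import structures.
From mathcomp Require Import all_boot all_order all_algebra.
Set Implicit Arguments. Unset Strict Implicit. Unset Printing Implicit Defensive.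
Import Order.TTheory GRing.Theory Num.Theory.
Local Open Scope ring_scope.

(* Enumeration of an index set I ⊆ [n] (in increasing order). *)
Definition idx (n : nat) (I : {set 'I_n}) : 'I_#|I| -> 'I_n := fun k => enum_val k.

Definition rowsJ (R : Type) m n (J : {set 'I_m}) (M : 'M[R]_(m, n)) : 'M[R]_(#|J|, n) :=
  rowsub (@idx m J) M.
Definition colsI (R : Type) m n (I : {set 'I_n}) (M : 'M[R]_(m, n)) : 'M[R]_(m, #|I|) :=
  colsub (@idx n I) M.
Definition blockJI (R : Type) m n (J : {set 'I_m}) (I : {set 'I_n}) (M : 'M[R]_(m, n))
  : 'M[R]_(#|J|, #|I|) := mxsub (@idx m J) (@idx n I) M.

Definition mxle (R : numDomainType) m n (u v : 'M[R]_(m, n)) : Prop :=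
  forall i j, u i j <= v i j.

Definition binary (R : numDomainType) n (x : 'cV[R]_n) : Prop :=
  forall i, x i 0 = 0 \/ x i 0 = 1.

Definition integral_mx (R : numDomainType) m n (M : 'M[R]_(m, n)) : Prop :=
  forall i j, exists z : int, M i j = z%:~R.

Definition totally_unimodular (R : numDomainType) m n (M : 'M[R]_(m, n)) : Prop :=
  forall k (f : 'I_k -> 'I_m) (g : 'I_k -> 'I_n), injective f -> injective g ->
    let D := \det (mxsub f g M) in D = -1 \/ D = 0 \/ D = 1.

(* The vector x ∈ R^n with x_I = u and x_{Ī} = v. *)
Definition assemble (R : numDomainType) n (I : {set 'I_n})
  (u : 'cV[R]_#|I|) (v : 'cV[R]_#|~: I|) : 'cV[R]_n :=
  \col_j (match [pick k | @idx n I k == j], [pick k | @idx n (~: I) k == j] with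
          | Some k, _ => u k 0
          | None, Some k => v k 0
          | None, None => 0
          end).

Definition is_opt (R : numDomainType) (X : Type) (feas : X -> Prop) (obj : X -> R) (x : X)
  : Prop := feas x /\ forall x', feas x' -> obj x <= obj x'.

From mathcomp Require Import all_boot all_order all_algebra.
From mathcomp Require Import zify lra.
Set Implicit Arguments. Unset Strict Implicit. Unset Printing Implicit Defensive.
Import Order.TTheory GRing.Theory Num.Theory.
Local Open Scope ring_scope.

(* Solving the rows J of Bx = d for x_I gives x_I = s + S x_Ī, and substituting
   this turns objective and remaining constraints into those of (P'); the rows J
   hold identically. The bounds -s <= S x_Ī <= 1 - s keep x_I in [0,1], and
   integrality of x_I is automatic: B_JI is a nonsingular square submatrix of
   the totally unimodular B_J, so det B_JI = ±1, its inverse ±adj B_JI is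
   integral, and so is x_I = B_JI^-1 (d_J - B_JĪ x_Ī) for binary x_Ī. *)

Lemma idx_in n (I : {set 'I_n}) (k : 'I_#|I|) : @idx n I k \in I.
Proof. exact: enum_valP. Qed.

Lemma idx_inj n (I : {set 'I_n}) : injective (@idx n I).
Proof. exact: enum_val_inj. Qed.

Lemma idx_neq_idxC n (I : {set 'I_n}) k l : @idx n I k != @idx n (~: I) l.
Proof. by apply/eqP => E; have := idx_in l; rewrite -E in_setC idx_in. Qed.

Lemma idx_cover n (I : {set 'I_n}) (i : 'I_n) :
  (exists k, @idx n I k = i) \/ (exists k, @idx n (~: I) k = i).
Proof.
have idx_onto (K : {set 'I_n}) : i \in K -> exists k, @idx n K k = i.
  by move=> iK; exists (enum_rank_in iK i); rewrite /idx enum_rankK_in.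
by case: (boolP (i \in I)) => iI; [left | right]; apply: idx_onto; rewrite ?in_setC.
Qed.

Lemma rowsJE (R : Type) p n (J : {set 'I_p}) (M : 'M[R]_(p, n)) k j :
  rowsJ J M k j = M (@idx p J k) j.
Proof. by rewrite mxE. Qed.

Lemma rowsJ_mul (R : pzRingType) p n q (J : {set 'I_p})
  (M : 'M[R]_(p, n)) (N : 'M[R]_(n, q)) :
  rowsJ J (M *m N) = rowsJ J M *m N.
Proof. by apply/matrixP => i k; rewrite !mxE; apply: eq_bigr => a _; rewrite !mxE. Qed.

Lemma rowsJ_tr (R : Type) p n (J : {set 'I_p}) (M : 'M[R]_(p, n)) :
  (rowsJ J M)^T = colsI J M^T.
Proof. by apply/matrixP => i k; rewrite !mxE. Qed.

Lemma colsI_rowsJ (R : Type) p n (J : {set 'I_p}) (I : {set 'I_n}) (M : 'M[R]_(p, n)) :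
  colsI I (rowsJ J M) = blockJI J I M.
Proof. by apply/matrixP => i k; rewrite !mxE. Qed.

Lemma blockJI_tr (R : Type) p n (J : {set 'I_p}) (I : {set 'I_n}) (M : 'M[R]_(p, n)) :
  (blockJI J I M)^T = blockJI I J M^T.
Proof. by apply/matrixP => i k; rewrite !mxE. Qed.

Lemma mulmx_split (R : pzRingType) p n q (I : {set 'I_n})
  (M : 'M[R]_(p, n)) (N : 'M[R]_(n, q)) :
  M *m N = colsI I M *m rowsJ I N + colsI (~: I) M *m rowsJ (~: I) N.
Proof.
apply/matrixP => i k; rewrite !mxE (bigID (mem I)) /=; congr (_ + _).
  by rewrite big_enum_val; apply: eq_bigr => a _; rewrite !mxE.
rewrite (eq_bigl (mem (~: I))) => [|j]; last by rewrite /= in_setC.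
by rewrite big_enum_val; apply: eq_bigr => a _; rewrite !mxE.
Qed.

Lemma rowsJ_split (R : pzRingType) p n q (J : {set 'I_p}) (I : {set 'I_n})
  (M : 'M[R]_(p, n)) (N : 'M[R]_(n, q)) :
  rowsJ J (M *m N) = blockJI J I M *m rowsJ I N + blockJI J (~: I) M *m rowsJ (~: I) N.
Proof. by rewrite rowsJ_mul (mulmx_split I) !colsI_rowsJ. Qed.

Lemma rowsJ_inj (R : Type) p n (J : {set 'I_p}) (M N : 'M[R]_(p, n)) :
  rowsJ J M = rowsJ J N -> rowsJ (~: J) M = rowsJ (~: J) N -> M = N.
Proof.
move=> /matrixP EJ /matrixP EJc; apply/matrixP => i j.
by case: (idx_cover J i) => -[k <-]; [have := EJ k j | have := EJc k j]; rewrite !mxE.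
Qed.

Section Assemble.
Variables (R : numDomainType) (n : nat) (I : {set 'I_n}).

Lemma rowsJ_assemble u v : rowsJ I (@assemble R n I u v) = u.
Proof.
apply/matrixP => k j; rewrite !mxE (ord1 j).
by case: pickP => [k' /eqP/idx_inj -> // | /(_ k)]; rewrite eqxx.
Qed.

Lemma rowsJC_assemble u v : rowsJ (~: I) (@assemble R n I u v) = v.
Proof.
apply/matrixP => k j; rewrite !mxE (ord1 j).
case: pickP => [k' | _]; first by rewrite (negPf (idx_neq_idxC _ _)).
by case: pickP => [k' /eqP/idx_inj -> // | /(_ k)]; rewrite eqxx.
Qed.

Lemma assemble_rowsJ (x : 'cV[R]_n) : @assemble R n I (rowsJ I x) (rowsJ (~: I) x) = x.
Proof. by apply: (rowsJ_inj (J := I)); rewrite ?rowsJ_assemble ?rowsJC_assemble. Qed.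

Lemma mulmx_assemble p (M : 'M[R]_(p, n)) u v :
  M *m @assemble R n I u v = colsI I M *m u + colsI (~: I) M *m v.
Proof. by rewrite (mulmx_split I) rowsJ_assemble rowsJC_assemble. Qed.

Lemma binary_assemble u v : binary u -> binary v -> binary (@assemble R n I u v).
Proof.
move=> bu bv i; case: (idx_cover I i) => -[k <-].
  by rewrite -rowsJE rowsJ_assemble.
by rewrite -rowsJE rowsJC_assemble.
Qed.

End Assemble.

Section Integrality.
Variable R : numDomainType.

Definition intmx m n (M : 'M[R]_(m, n)) := exists Mz : 'M[int]_(m, n), M = map_mx intr Mz.

Lemma integral_intmx m n (M : 'M[R]_(m, n)) : integral_mx M -> intmx M.
Proof.
move=> Mint; have Mint' i j : exists z : int, M i j == z%:~R.
  by have [z ->] := Mint i j; exists z.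
exists (\matrix_(i, j) xchoose (Mint' i j)); apply/matrixP => i j.
by rewrite !mxE; exact/eqP/(xchooseP (Mint' i j)).
Qed.

Lemma integral_blockJI m n (J : {set 'I_m}) (I : {set 'I_n}) (M : 'M[R]_(m, n)) :
  integral_mx (rowsJ J M) -> integral_mx (blockJI J I M).
Proof. by move=> Mint i j; have [z Ez] := Mint i (@idx n I j); exists z; rewrite -Ez !mxE. Qed.

Lemma tu_blockJI m n (J : {set 'I_m}) (I : {set 'I_n}) (M : 'M[R]_(m, n)) :
  totally_unimodular (rowsJ J M) -> totally_unimodular (blockJI J I M).
Proof.
move=> Mtu k f g f_inj g_inj.
have := Mtu k f (@idx n I \o g) f_inj (inj_comp (@idx_inj n I) g_inj).
suff -> : mxsub f (@idx n I \o g) (rowsJ J M) = mxsub f g (blockJI J I M) by [].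
by apply/matrixP => i j; rewrite !mxE.
Qed.

Lemma binary_intmx n (y : 'cV[R]_n) : binary y -> intmx y.
Proof.
move=> yb; apply: integral_intmx => i j.
by rewrite (ord1 j); case: (yb i) => ->; [exists 0 | exists 1].
Qed.

Lemma intmxM m n p (M : 'M[R]_(m, n)) (N : 'M[R]_(n, p)) :
  intmx M -> intmx N -> intmx (M *m N).
Proof. by case=> Mz -> [Nz ->]; exists (Mz *m Nz); rewrite map_mxM. Qed.

Lemma intmxB m n (M N : 'M[R]_(m, n)) : intmx M -> intmx N -> intmx (M - N).
Proof. by case=> Mz -> [Nz ->]; exists (Mz - Nz); rewrite map_mxB. Qed.

Lemma intmx_invmx k (M : 'M[R]_k) :
  intmx M -> \det M = 1 \/ \det M = -1 -> intmx (invmx M).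
Proof.
case=> Mz -> detM; have Mu : (map_mx intr Mz : 'M[R]_k) \in unitmx.
  by rewrite unitmxE; case: detM => ->; rewrite ?unitrN unitr1.
rewrite /invmx Mu -map_mx_adj.
case: detM => ->; first by exists (\adj Mz); rewrite invr1 scale1r.
by exists (- \adj Mz); rewrite invrN1 scaleN1r map_mxN.
Qed.

Lemma tu_inverse_intmx k1 k2 (M : 'M[R]_(k1, k2)) (N : 'M[R]_(k2, k1)) :
  intmx M -> totally_unimodular M -> N *m M = 1%:M -> M *m N = 1%:M -> intmx N.
Proof.
move=> Mint Mtu NM MN; have /eqP k21 : k2 == k1.
  by rewrite eqn_leq (mulmx1_min NM) (mulmx1_min MN).
subst k2; have Mu : M \in unitmx by case: (mulmx1_unit MN).
have -> : N = invmx M by rewrite -[N]mulmx1 -(mulmxV Mu) mulmxA NM mul1mx.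
apply: intmx_invmx => //.
have := Mtu k1 id id (@inj_id _) (@inj_id _).
have -> : mxsub id id M = M by apply/matrixP => i j; rewrite mxE.
case=> [-> | [det0 | ->]]; [by right | | by left].
by move: Mu; rewrite unitmxE det0 unitr0.
Qed.

End Integrality.

Lemma binary_bounds (R : numDomainType) n (x : 'cV[R]_n) :
  binary x -> mxle 0 x /\ mxle x (const_mx 1).
Proof. by move=> xb; split=> i j; rewrite !mxE (ord1 j); case: (xb i) => ->. Qed.

Lemma binary_rowsJ (R : numDomainType) n (I : {set 'I_n}) (x : 'cV[R]_n) :
  binary x -> binary (rowsJ I x).
Proof. by move=> xb k; rewrite rowsJE. Qed.

Lemma intmx_binary (R : numDomainType) n (x : 'cV[R]_n) :
  intmx x -> mxle 0 x -> mxle x (const_mx 1) -> binary x.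
Proof.
case=> z -> x_ge0 x_le1 i; have := x_ge0 i 0; have := x_le1 i 0; rewrite !mxE.
rewrite ler0z lerz1 => z_le1 z_ge0.
by (have [->|->] : z i 0 = 0 \/ z i 0 = 1 by lia); [left | right].
Qed.

Lemma mxleBlDl (R : numDomainType) m n (b u v : 'M[R]_(m, n)) :
  mxle (b - u) v <-> mxle b (u + v).
Proof. by split=> le_bv i j; have := le_bv i j; rewrite !mxE lerBlDl. Qed.

Lemma mxleBrDl (R : numDomainType) m n (u v w : 'M[R]_(m, n)) :
  mxle v (w - u) <-> mxle (u + v) w.
Proof. by split=> le_vw i j; have := le_vw i j; rewrite !mxE lerBrDl. Qed.

Lemma trmx11 (R : Type) (A : 'M[R]_1) : A^T = A.
Proof. by apply/matrixP => i j; rewrite !ord1 mxE. Qed.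

Lemma form_tr (R : comPzRingType) p q (u : 'cV[R]_p) (M : 'M[R]_(p, q)) (v : 'cV[R]_q) :
  u^T *m M *m v = v^T *m M^T *m u.
Proof. by rewrite -[LHS]trmx11 !trmx_mul trmxK mulmxA. Qed.

Lemma quad_form_split (R : comPzRingType) n (I : {set 'I_n}) (Q : 'M[R]_n) (x : 'cV[R]_n) :
  Q^T = Q ->
  x^T *m Q *m x = (rowsJ I x)^T *m blockJI I I Q *m rowsJ I x
    + ((rowsJ I x)^T *m blockJI I (~: I) Q *m rowsJ (~: I) x) *+ 2
    + (rowsJ (~: I) x)^T *m blockJI (~: I) (~: I) Q *m rowsJ (~: I) x.
Proof.
move=> Qsym; rewrite -mulmxA (mulmx_split I x^T) -!rowsJ_tr !(rowsJ_split _ I).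
have -> : blockJI (~: I) I Q = (blockJI I (~: I) Q)^T by rewrite blockJI_tr Qsym.
rewrite !mulmxDr !mulmxA (form_tr _ (blockJI I (~: I) Q)^T) trmxK.
by rewrite mulr2n !addrA.
Qed.

Section AffineSubstitution.
Variables (R : realDomainType) (n : nat) (I : {set 'I_n}).
Variables (s : 'cV[R]_#|I|) (S : 'M[R]_(#|I|, #|~: I|)).

Local Notation lift y := (@assemble R n I (s + S *m y) y).

Lemma lift_inj y1 y2 : lift y1 = lift y2 -> y1 = y2.
Proof. by move/(congr1 (rowsJ (~: I))); rewrite !rowsJC_assemble. Qed.

Lemma mulmx_lift p (M : 'M[R]_(p, n)) y :
  M *m lift y = colsI I M *m s + (colsI I M *m S + colsI (~: I) M) *m y.
Proof. by rewrite mulmx_assemble mulmxDr mulmxDl addrA mulmxA. Qed.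

Lemma mxle_lift m (A : 'M[R]_(m, n)) b y :
  mxle b (A *m lift y) <-> mxle (b - colsI I A *m s) ((colsI I A *m S + colsI (~: I) A) *m y).
Proof. by rewrite mulmx_lift; split => /mxleBlDl. Qed.

Lemma binary_lift y :
  binary y -> intmx (s + S *m y) ->
  mxle (- s) (S *m y) -> mxle (S *m y) (const_mx 1 - s) -> binary (lift y).
Proof.
move=> yb int_xI lo hi; apply: binary_assemble yb; apply: intmx_binary int_xI _ _.
  by apply/mxleBlDl; rewrite sub0r.
exact/mxleBrDl.
Qed.

Lemma objective_lift (Q : 'M[R]_n) (c : 'cV[R]_n) y : Q^T = Q ->
  let QII := blockJI I I Q in let QIIb := blockJI I (~: I) Q in
  let QIbIb := blockJI (~: I) (~: I) Q in
  ((lift y)^T *m Q *m lift y) 0 0 + (c^T *m lift y) 0 0 =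
    (y^T *m (S^T *m QII *m S + S^T *m QIIb + QIIb^T *m S + QIbIb) *m y) 0 0
  + (((S^T *m QII *m s) *+ 2 + (QIIb^T *m s) *+ 2 + S^T *m rowsJ I c
      + rowsJ (~: I) c)^T *m y) 0 0
  + ((s^T *m QII *m s) 0 0 + ((rowsJ I c)^T *m s) 0 0).
Proof.
move=> Qsym QII QIIb QIbIb.
(* As traces, the entries become linear in the 1x1 products, and the cross
   terms can be matched up to transposition with mxtrace_tr. *)
rewrite -!trace_mx11 (quad_form_split I) // (mulmx_split I c^T) -!rowsJ_tr.
rewrite rowsJ_assemble rowsJC_assemble.
rewrite !raddfD /= !trmx_mul !trmxK -/QII -/QIIb -/QIbIb.
have QIIsym : QII^T = QII by rewrite blockJI_tr Qsym.
rewrite QIIsym !mulmxDl !mulmxA !raddfD /=.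
rewrite -[\tr (y^T *m S^T *m QII *m s)]mxtrace_tr -[\tr (y^T *m QIIb^T *m S *m y)]mxtrace_tr.
rewrite !trmx_mul !trmxK QIIsym !mulmxA; lra.
Qed.
End AffineSubstitution.

Section EliminateEqualities.
Variables (R : realDomainType) (n m : nat) (B : 'M[R]_(m, n)) (d : 'cV[R]_m).
Variables (J : {set 'I_m}) (I : {set 'I_n}) (BJIinv : 'M[R]_(#|I|, #|J|)).
Hypothesis BinvB : BJIinv *m blockJI J I B = 1%:M.
Hypothesis BBinv : blockJI J I B *m BJIinv = 1%:M.

Local Notation s := (BJIinv *m rowsJ J d).
Local Notation S := (- (BJIinv *m blockJI J (~: I) B)).
Local Notation lift y := (@assemble R n I (s + S *m y) y).

Lemma rowsJ_mulmx_lift y : rowsJ J (B *m lift y) = rowsJ J d.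
Proof.
rewrite rowsJ_mul mulmx_lift !colsI_rowsJ mulmxN !mulmxA BBinv !mul1mx.
by rewrite addNr mul0mx addr0.
Qed.

Lemma mulmx_lift_eq y :
  B *m lift y = d <->
  (blockJI (~: J) I B *m S + blockJI (~: J) (~: I) B) *m y
    = rowsJ (~: J) d - blockJI (~: J) I B *m s.
Proof.
have rowsJC_lift : rowsJ (~: J) (B *m lift y)
    = blockJI (~: J) I B *m s + (blockJI (~: J) I B *m S + blockJI (~: J) (~: I) B) *m y.
  by rewrite rowsJ_mul mulmx_lift !colsI_rowsJ.
split=> [/(congr1 (rowsJ (~: J))) | B'y].
  by rewrite rowsJC_lift => <-; rewrite addrAC subrr add0r.
apply: (rowsJ_inj (J := J)); first exact: rowsJ_mulmx_lift.
by rewrite rowsJC_lift B'y addrC subrK.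
Qed.

Lemma lift_rowsJC x : B *m x = d -> lift (rowsJ (~: I) x) = x.
Proof.
move=> /(congr1 (rowsJ J)); rewrite (rowsJ_split _ I) => Bx.
suff -> : s + S *m rowsJ (~: I) x = rowsJ I x by rewrite assemble_rowsJ.
by rewrite -Bx mulmxDr mulNmx !mulmxA BinvB mul1mx addrK.
Qed.

Lemma intmx_solved_vars y :
  integral_mx (rowsJ J B) -> integral_mx (rowsJ J d) -> totally_unimodular (rowsJ J B) ->
  binary y -> intmx (s + S *m y).
Proof.
move=> Bint dint Btu yb.
have int_block K : intmx (blockJI J K B) by exact/integral_intmx/integral_blockJI.
have -> : s + S *m y = BJIinv *m (rowsJ J d - blockJI J (~: I) B *m y).
  by rewrite mulmxDr mulmxN mulNmx mulmxA.
apply: intmxM; first exact: tu_inverse_intmx (int_block I) (tu_blockJI Btu) BinvB BBinv.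
exact: intmxB (integral_intmx dint) (intmxM (int_block _) (binary_intmx yb)).
Qed.

End EliminateEqualities.

Lemma is_opt_lift (R : numDomainType) (X Y : Type) (feasX : X -> Prop) (objX : X -> R)
  (feasY : Y -> Prop) (objY : Y -> R) (lift : Y -> X) :
  (forall y, feasY y -> feasX (lift y)) ->
  (forall y, feasY y -> objX (lift y) = objY y) ->
  (forall x, feasX x -> exists2 y, feasY y & lift y = x) ->
  forall y, feasY y -> is_opt feasY objY y <-> is_opt feasX objX (lift y).
Proof.
move=> feas_lift obj_lift lift_onto y fy; split=> -[_ y_min].
  split=> [|x /lift_onto[y' fy' <-]]; first exact: feas_lift.
  by rewrite !obj_lift //; apply: y_min.
split=> // y' fy'; rewrite -!obj_lift //; exact/y_min/feas_lift.
Qed.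

Theorem mainTheorem8 (R : realFieldType) (n m1 m2 : nat)
  (Q : 'M[R]_n) (c : 'cV[R]_n) (A : 'M[R]_(m1, n)) (b : 'cV[R]_m1)
  (B : 'M[R]_(m2, n)) (d : 'cV[R]_m2)
  (J : {set 'I_m2}) (I : {set 'I_n}) (BJIinv : 'M[R]_(#|I|, #|J|)) :
  Q^T = Q ->
  integral_mx (rowsJ J B) -> integral_mx (rowsJ J d) ->
  totally_unimodular (rowsJ J B) ->
  (* B_{JI} is invertible, with inverse BJIinv *)
  BJIinv *m blockJI J I B = 1%:M -> blockJI J I B *m BJIinv = 1%:M ->
  let Ib := ~: I in let Jb := ~: J in
  let s := BJIinv *m rowsJ J d in
  let S := - (BJIinv *m blockJI J Ib B) in
  let QII := blockJI I I Q in let QIIb := blockJI I Ib Q in let QIbIb := blockJI Ib Ib Q in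
  let Q' := S^T *m QII *m S + S^T *m QIIb + QIIb^T *m S + QIbIb in
  let A' := colsI I A *m S + colsI Ib A in
  let B' := blockJI Jb I B *m S + blockJI Jb Ib B in
  let b' := b - colsI I A *m s in
  let c' := (S^T *m QII *m s) *+ 2 + (QIIb^T *m s) *+ 2 + S^T *m rowsJ I c + rowsJ Ib c in
  let d' := rowsJ Jb d - blockJI Jb I B *m s in
  let c0' := (s^T *m QII *m s) 0 0 + ((rowsJ I c)^T *m s) 0 0 in
  (* problem (P) *)
  let feasP := fun x : 'cV[R]_n => binary x /\ mxle b (A *m x) /\ B *m x = d in
  let objP := fun x : 'cV[R]_n => (x^T *m Q *m x) 0 0 + (c^T *m x) 0 0 in
  (* problem (P') *)
  let feasP' := fun y : 'cV[R]_#|Ib| =>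
    [/\ binary y, mxle b' (A' *m y), B' *m y = d',
        mxle (- s) (S *m y) & mxle (S *m y) (const_mx 1 - s)] in
  let objP' := fun y : 'cV[R]_#|Ib| => (y^T *m Q' *m y) 0 0 + (c'^T *m y) 0 0 + c0' in
  (* the map x_Ī ↦ x with x_I := s + S x_Ī *)
  let lift := fun y : 'cV[R]_#|Ib| => @assemble R n I (s + S *m y) y in
  [/\ (forall y, feasP' y -> feasP (lift y)),
      (forall y, feasP' y -> objP (lift y) = objP' y),
      (forall y1 y2, feasP' y1 -> feasP' y2 -> lift y1 = lift y2 -> y1 = y2),
      (forall x, feasP x -> exists2 y, feasP' y & lift y = x)
    & (forall y, feasP' y -> (is_opt feasP' objP' y <-> is_opt feasP objP (lift y)))].
Proof.
move=> Qsym Bint dint Btu BinvB BBinv Ib Jb s S QII QIIb QIbIb Q' A' B' b' c' d' c0'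
  feasP objP feasP' objP' lift.
have feas_lift y : feasP' y -> feasP (lift y).
  case=> yb Ay B'y lo hi; split; last split.
  - exact: binary_lift yb (intmx_solved_vars BinvB BBinv Bint dint Btu yb) lo hi.
  - exact/mxle_lift.
  - exact/mulmx_lift_eq.
have obj_lift y : objP (lift y) = objP' y by exact: objective_lift.
have lift_onto x : feasP x -> exists2 y, feasP' y & lift y = x.
  case=> xb [Ax Bx]; have xE := lift_rowsJC BinvB Bx.
  have xI : rowsJ I x = s + S *m rowsJ Ib x by rewrite -{1}xE rowsJ_assemble.
  have /binary_bounds[xI_ge0 xI_le1] : binary (rowsJ I x) by exact: binary_rowsJ.
  exists (rowsJ Ib x) => //; split.
  - exact: binary_rowsJ.
  - by apply/mxle_lift; rewrite xE.
  - by apply/(mulmx_lift_eq _ BBinv); rewrite xE.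
  - by rewrite -sub0r; apply/mxleBlDl; rewrite -xI.
  - by apply/mxleBrDl; rewrite -xI.
split=> [//| y _ | y1 y2 _ _ | // | ]; first exact: obj_lift.
  exact: lift_inj.
exact: is_opt_lift.
Qed.
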